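(* Let $n \ge 2$ and let $Q(x) = x_1x_2 + x_3x_4 + \cdots + x_{2n-1}x_{2n}$ be the hyperbolic quadratic form on $V(2n,2)$, with associated symmetric bilinear form $B(x,y) = Q(x+y)-Q(x)-Q(y)$ and orthogonality $\perp$ with respect to $B$. Let $\Pi$ and $\Sigma$ be two totally singular $n$-dimensional subspaces with $\Pi \cap \Sigma = 0$. For a non-singular point $X$, put $G = X^\perp \cap \Pi$, $H = X^\perp \cap \Sigma$, $P = G^\perp \cap \Sigma$, and define $f(X) = (P,H)$. Then $f$ is a bijection from the set of non-singular points of $V(2n,2)$ (with respect to $Q$) onto the set of point-hyperplane antiflags of $\Sigma \cong V(n,2)$.
   Context: Points are $1$-dimensional subspaces. A point $\langle x\rangle$ is singular if $Q(x)=0$, non-singular otherwise; a subspace is totally singular if all its points are singular. A point-hyperplane antiflag of $\Sigma$ is a pair $(P,H)$ with $P$ a $1$-dimensional subspace of $\Sigma$, $H$ an $(n-1)$-dimensional subspace of $\Sigma$, and $P \not\subseteq H$. *)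

From HB Require Import structures.
From mathcomp Require Import all_boot all_order all_algebra all_field.
Set Implicit Arguments. Unset Strict Implicit. Unset Printing Implicit Defensive.
Import GRing.Theory.
Local Open Scope ring_scope.

(* The ambient space V(2n,2) is 'rV['F_2]_(n.*2).  Coordinates are 0-indexed:
   the paper's x_{2i-1} x_{2i} (i = 1..n) is our x_(2i) x_(2i+1) (i = 0..n-1). *)
Notation V n := 'rV['F_2]_(n.*2).

Lemma ev_lt n (i : 'I_n) : (i.*2 < n.*2)%N.
Proof. by rewrite ltn_double. Qed.

Lemma od_lt n (i : 'I_n) : (i.*2.+1 < n.*2)%N.
Proof. by rewrite -doubleS leq_double. Qed.

Definition ev n (i : 'I_n) : 'I_(n.*2) := Ordinal (ev_lt i).
Definition od n (i : 'I_n) : 'I_(n.*2) := Ordinal (od_lt i).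

Definition Qf n (x : V n) : 'F_2 := \sum_(i < n) x 0 (ev i) * x 0 (od i).

Definition Bf n (x y : V n) : 'F_2 := Qf (x + y) - Qf x - Qf y.

Definition perp n (U : {vspace V n}) : {vspace V n} :=
  <<[seq y <- enum [set: V n] | [forall x : V n, (x \in U) ==> (Bf x y == 0%R)]]>>%VS.

Definition is_point n (X : {vspace V n}) : Prop := \dim X = 1%N.

Definition nonsingular_point n (X : {vspace V n}) : Prop :=
  is_point X /\ exists x, x \in X /\ Qf x != 0.

Definition totally_singular n (U : {vspace V n}) : Prop :=
  forall x, x \in U -> Qf x = 0.

Definition antiflag n (Sigma : {vspace V n}) (PH : {vspace V n} * {vspace V n}) : Prop :=
  [/\ (PH.1 <= Sigma)%VS, \dim PH.1 = 1%N,
      (PH.2 <= Sigma)%VS, \dim PH.2 = (n - 1)%N & ~~ (PH.1 <= PH.2)%VS].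

Definition fmap n (Pi Sigma X : {vspace V n}) : {vspace V n} * {vspace V n} :=
  let G := (perp X :&: Pi)%VS in
  let H := (perp X :&: Sigma)%VS in
  let P := (perp G :&: Sigma)%VS in
  (P, H).

From HB Require Import structures.
From mathcomp Require Import all_boot all_order all_algebra all_field.
From mathcomp Require Import ring.
Set Implicit Arguments. Unset Strict Implicit. Unset Printing Implicit Defensive.
Import GRing.Theory.
Local Open Scope ring_scope.

(* V = Pi (+) Sigma, and since both summands are totally singular while B is
   non-degenerate, B restricts to a perfect pairing Pi x Sigma -> F_2.  Every
   non-singular point is therefore <p + s> with p in Pi, s in Sigma and
   B(p,s) = Q(p + s) = 1, and a direct computation gives
   f(<p + s>) = (<s>, p^perp :&: Sigma).  Conversely, an antiflag (<s>, H) of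
   Sigma fixes s (over F_2 a point has a single non-zero vector), and by the
   pairing there is exactly one p in Pi vanishing on H with B(p,s) = 1. *)

Lemma F2_eq1 (c : 'F_2) : c != 0 -> c = 1.
Proof. by case: c => [[|[|//]] Hc] //= _; apply/val_inj. Qed.

Section Lines.
Variables (K : fieldType) (vT : vectType K).
Implicit Types (U : {vspace vT}) (v : vT).

Lemma capv_line0 U v : v \notin U -> (U :&: <[v]> = 0)%VS.
Proof.
move=> vU; apply/eqP; rewrite -subv0; apply/subvP => w; rewrite memv_cap memv0.
case/andP => wU /vlineP [c wE]; move: wU; rewrite wE.
have [->|c0] := eqVneq c 0; first by rewrite scale0r eqxx.
by move=> /(memvZ c^-1); rewrite scalerK // (negbTE vU).
Qed.

Lemma dim_addv_line U v : v \notin U -> \dim (U + <[v]>) = (\dim U).+1.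
Proof.
move=> vU; have v0 : v != 0 by apply: contraNneq vU => ->; apply: mem0v.
by rewrite dimv_disjoint_sum ?capv_line0 // dim_vline v0 addn1.
Qed.

Lemma vpick_line U : \dim U = 1%N -> U = <[vpick U]>%VS.
Proof.
move=> dimU; have U0 : U != 0%VS by rewrite -dimv_eq0 dimU.
by apply/esym/eqP; rewrite eqEdim -memvE memv_pick dim_vline vpick0 U0 dimU.
Qed.

End Lines.

Lemma vline_inj_F2 (vT : vectType 'F_2) (u v : vT) :
  v != 0 -> <[u]>%VS = <[v]>%VS -> u = v.
Proof.
move=> v0 uv; have /vlineP [c vE] : v \in <[u]>%VS by rewrite uv memv_line.
have c0 : c != 0 by apply: contraNneq v0 => c0; rewrite vE c0 scale0r.
by rewrite vE (F2_eq1 c0) scale1r.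
Qed.

Section HyperbolicForm.
Variable n : nat.
Implicit Types x y z : V n.

Lemma Bf_expand x y :
  Bf x y = \sum_(i < n) (x 0 (ev i) * y 0 (od i) + x 0 (od i) * y 0 (ev i)).
Proof. by rewrite /Bf /Qf -!sumrB; apply: eq_bigr => i _; rewrite !mxE; ring. Qed.

Lemma BfC x y : Bf x y = Bf y x.
Proof. by rewrite /Bf [y + x]addrC; ring. Qed.

Fact Bf_is_linear x : linear_for *%R (Bf x).
Proof.
move=> a y z; rewrite !Bf_expand mulr_sumr -big_split /=.
by apply: eq_bigr => i _; rewrite !mxE; ring.
Qed.

HB.instance Definition _ x :=
  GRing.isLinear.Build 'F_2 (V n) 'F_2 *%R (Bf x) (Bf_is_linear x).

Lemma BfBl x y z : Bf (x - y) z = Bf x z - Bf y z.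
Proof. by rewrite BfC linearB /= !(BfC z). Qed.

Lemma BfZl a x y : Bf (a *: x) y = a * Bf x y.
Proof. by rewrite BfC linearZ /= BfC. Qed.

Lemma Bf_eq1_neq0 x y : Bf x y = 1 -> y != 0.
Proof.
move=> Bxy; apply/eqP => y0; move: Bxy.
by rewrite y0 linear0 => /eqP; rewrite eq_sym oner_eq0.
Qed.

Lemma QfD x y : Qf (x + y) = Qf x + Qf y + Bf x y.
Proof. by rewrite /Bf; ring. Qed.

Lemma Qf0 : Qf (0 : V n) = 0.
Proof. by rewrite /Qf big1 // => i _; rewrite mxE mul0r. Qed.

Lemma ev_inj : injective (@ev n).
Proof. by move=> i j /(congr1 val) /double_inj /val_inj. Qed.

Lemma od_inj : injective (@od n).
Proof. by move=> i j /(congr1 val) [/double_inj /val_inj]. Qed.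

Lemma ev_neq_od (i j : 'I_n) : ev i != od j.
Proof. by rewrite -val_eqE; apply/eqP => /(congr1 odd); rewrite /= !odd_double. Qed.

Lemma Bf_delta_od x (i : 'I_n) : Bf x (delta_mx 0 (od i)) = x 0 (ev i).
Proof.
rewrite Bf_expand (bigD1 i) //= big1 => [|j ji]; rewrite !mxE !eqxx /=.
  by rewrite (negbTE (ev_neq_od i i)) mulr1 mulr0 !addr0.
by rewrite (inj_eq od_inj) (negbTE ji) (negbTE (ev_neq_od _ _)) !mulr0 addr0.
Qed.

Lemma Bf_delta_ev x (i : 'I_n) : Bf x (delta_mx 0 (ev i)) = x 0 (od i).
Proof.
rewrite Bf_expand (bigD1 i) //= big1 => [|j ji]; rewrite !mxE !eqxx /=.
  by rewrite eq_sym (negbTE (ev_neq_od i i)) mulr1 mulr0 !add0r addr0.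
rewrite (inj_eq ev_inj) (negbTE ji) [od _ == _]eq_sym.
by rewrite (negbTE (ev_neq_od _ _)) !mulr0 addr0.
Qed.

Lemma Bf_nondegenerate x : (forall y, Bf x y = 0) -> x = 0.
Proof.
move=> x0; apply/rowP => k; rewrite mxE.
have k_lt : (k./2 < n)%N by rewrite ltn_half_double.
have := odd_double_half k; case: (boolP (odd k)) => [ok|ek] kE.
  have -> : k = od (Ordinal k_lt) by apply: val_inj; rewrite /= -[LHS]kE.
  by rewrite -Bf_delta_ev x0.
have -> : k = ev (Ordinal k_lt) by apply: val_inj; rewrite /= -[LHS]kE.
by rewrite -Bf_delta_od x0.
Qed.

End HyperbolicForm.

Lemma memv_perp n (U : {vspace V n}) y :
  y \in perp U <-> (forall x, x \in U -> Bf x y = 0).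
Proof.
rewrite /perp; set s := [seq _ <- _ | _]; split.
  move=> /(coord_span (X := in_tuple s)) -> x xU.
  rewrite linear_sum big1 // => i _ /=.
  have : s`_i \in s by apply: mem_nth.
  rewrite mem_filter => /andP [/forallP /(_ x) /implyP /(_ xU) /eqP Bx0 _].
  by rewrite linearZ /= Bx0 mulr0.
move=> yU; apply: memv_span; rewrite mem_filter mem_enum in_setT andbT.
by apply/forallP => x; apply/implyP => xU; apply/eqP; apply: yU.
Qed.

Lemma memv_perp_line n (x y : V n) : y \in perp <[x]>%VS <-> Bf x y = 0.
Proof.
rewrite memv_perp; split => [|Bxy0 _ /vlineP [c ->]]; first by apply; apply: memv_line.
by rewrite BfC linearZ /= BfC Bxy0 mulr0.
Qed.

Definition Bf_row n (H : {vspace V n}) (v : V n) : 'rV['F_2]_(\dim H) :=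
  \row_i Bf (vbasis H)`_i v.

Fact Bf_row_is_linear n (H : {vspace V n}) : linear (Bf_row H).
Proof. by move=> a u v; apply/rowP => i; rewrite !mxE linearP. Qed.

HB.instance Definition _ n H :=
  GRing.isLinear.Build 'F_2 (V n) 'rV['F_2]_(\dim H) *:%R (@Bf_row n H)
    (Bf_row_is_linear H).

(* Rank-nullity for v |-> (B(h_i, v))_i, with (h_i) a basis of H. *)
Lemma perp_cap_neq0 n (U H : {vspace V n}) :
  (\dim H < \dim U)%N -> (U :&: perp H != 0)%VS.
Proof.
move=> ltHU; set f := linfun (Bf_row H).
have sub_perp : (U :&: lker f <= U :&: perp H)%VS.
  apply/subvP => v; rewrite !memv_cap memv_ker lfunE => /andP [-> /eqP fv0].
  apply/memv_perp => h /coord_vbasis ->; rewrite BfC linear_sum big1 // => i _.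
  have := congr1 (fun r : 'rV_(\dim H) => r 0 i) fv0; rewrite !mxE => Bv0.
  by rewrite linearZ /= BfC Bv0 mulr0.
have dim_img : (\dim (f @: U) <= \dim H)%N.
  by rewrite (leq_trans (dimvS (subvf _))) // dimvf /dim /= mul1n.
rewrite -dimv_eq0 -lt0n (leq_trans _ (dimvS sub_perp)) // lt0n.
apply: contraTneq ltHU => ker0; rewrite -leqNgt.
by rewrite -(limg_ker_dim f U) ker0 add0n.
Qed.

Lemma Bf_totally_singular n (U : {vspace V n}) x y :
  totally_singular U -> x \in U -> y \in U -> Bf x y = 0.
Proof. by move=> tsU xU yU; rewrite /Bf !tsU ?memvD // !subr0. Qed.

Section TotallySingular.
Variables (n : nat) (U W : {vspace V n}).
Implicit Types x y : V n.

Lemma Qf_add_totally_singular x y :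
  totally_singular U -> totally_singular W -> x \in U -> y \in W ->
  Qf (x + y) = Bf x y.
Proof. by move=> tsU tsW xU yW; rewrite QfD tsU // tsW // !add0r. Qed.

Lemma perp_line_addr_cap x y :
  totally_singular W -> y \in W ->
  (perp <[x + y]> :&: W = perp <[x]> :&: W)%VS.
Proof.
move=> tsW yW; apply/vspaceP => z; rewrite !memv_cap.
have [zW|] := boolP (z \in W); rewrite ?andbT ?andbF //.
have Bxy_z : Bf (x + y) z = Bf x z.
  by rewrite BfC linearD /= (Bf_totally_singular tsW zW yW) addr0 BfC.
by apply/idP/idP => /memv_perp_line Bz0; apply/memv_perp_line;
  [rewrite -Bxy_z | rewrite Bxy_z].
Qed.

Lemma Bf_eq0_complement y :
  totally_singular W -> (U + W = fullv)%VS -> y \in W ->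
  (forall x, x \in U -> Bf y x = 0) -> y = 0.
Proof.
move=> tsW UW yW yU; apply: Bf_nondegenerate => z.
have /memv_addP [x xU [w wW ->]] : z \in (U + W)%VS by rewrite UW memvf.
by rewrite linearD /= yU // (Bf_totally_singular tsW) // addr0.
Qed.

End TotallySingular.

Section PolarHyperplane.
Variables (n : nat) (U : {vspace V n}) (x u : V n).
Hypotheses (uU : u \in U) (Bxu : Bf x u = 1).

Lemma notin_perp_line : u \notin (perp <[x]> :&: U)%VS.
Proof.
rewrite memv_cap negb_and; apply/orP; left; apply/negP => /memv_perp_line.
by rewrite Bxu => /eqP; rewrite oner_eq0.
Qed.

Lemma perp_line_cap_addv_line : (perp <[x]> :&: U + <[u]> = U)%VS.
Proof.
apply/vspaceP => v; apply/memv_addP/idP => [[w + [_ /vlineP [c ->] ->]]|vU].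
  by rewrite memv_cap => /andP [_ wU]; rewrite memvD // memvZ.
exists (v - Bf x v *: u).
  rewrite memv_cap; apply/andP; split; last by rewrite memvB ?memvZ.
  by apply/memv_perp_line; rewrite linearB linearZ /= Bxu mulr1 subrr.
by exists (Bf x v *: u); rewrite ?memvZ ?memv_line ?subrK.
Qed.

Lemma dim_perp_line_cap : \dim (perp <[x]> :&: U) = (\dim U).-1.
Proof. by rewrite -{2}perp_line_cap_addv_line dim_addv_line // notin_perp_line. Qed.

End PolarHyperplane.

Section PolarityMap.
Variables (n : nat) (Pi Sigma : {vspace V n}).
Hypotheses (tsPi : totally_singular Pi) (tsSigma : totally_singular Sigma).
Hypotheses (dimPi : \dim Pi = n) (dimSigma : \dim Sigma = n).
Hypothesis Pi_cap_Sigma : (Pi :&: Sigma = 0)%VS.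

Lemma addv_Pi_Sigma : (Pi + Sigma = fullv)%VS.
Proof.
apply/eqP; rewrite eqEdim subvf dimvf dimv_disjoint_sum // dimPi dimSigma.
by rewrite /dim /= mul1n addnn.
Qed.

Lemma Pi_Bf_eq0 p : p \in Pi -> (forall s, s \in Sigma -> Bf p s = 0) -> p = 0.
Proof. by apply: Bf_eq0_complement; rewrite // addvC addv_Pi_Sigma. Qed.

Lemma Sigma_Bf_eq0 s : s \in Sigma -> (forall p, p \in Pi -> Bf s p = 0) -> s = 0.
Proof. exact: Bf_eq0_complement addv_Pi_Sigma. Qed.

Lemma nonsingular_pointP X : nonsingular_point X ->
  exists p s, [/\ p \in Pi, s \in Sigma, Bf p s = 1 & X = <[p + s]>%VS].
Proof.
case=> dimX [x [xX Qx]].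
have x0 : x != 0 by apply: contraNneq Qx => ->; rewrite Qf0.
have /memv_addP [p pPi [s sSigma xE]] : x \in (Pi + Sigma)%VS.
  by rewrite addv_Pi_Sigma memvf.
exists p, s; split => //.
  by apply: F2_eq1; rewrite -(Qf_add_totally_singular tsPi tsSigma) // -xE.
by apply/eqP; rewrite -xE eq_sym eqEdim -memvE xX dim_vline x0 dimX.
Qed.

Lemma nonsingular_point_line p s :
  p \in Pi -> s \in Sigma -> Bf p s = 1 -> nonsingular_point <[p + s]>%VS.
Proof.
move=> pPi sSigma Bps.
have Qps : Qf (p + s) = 1 by rewrite (Qf_add_totally_singular tsPi tsSigma).
have ps0 : p + s != 0.
  by apply: contraTneq (oner_neq0 'F_2) => ps0; rewrite -Qps ps0 Qf0 eqxx.
split; first by rewrite /is_point dim_vline ps0.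
by exists (p + s); rewrite memv_line Qps oner_neq0.
Qed.

Lemma perp_perp_line_cap p s : p \in Pi -> s \in Sigma -> Bf p s = 1 ->
  (perp (perp <[s]> :&: Pi) :&: Sigma = <[s]>)%VS.
Proof.
move=> pPi sSigma Bps; apply/vspaceP => t; rewrite memv_cap.
apply/andP/idP => [[/memv_perp tG tSigma]|/vlineP [c ->]]; last first.
  split; last by rewrite memvZ.
  apply/memv_perp => q; rewrite memv_cap => /andP [/memv_perp_line Bsq _].
  by rewrite linearZ /= BfC Bsq mulr0.
suff -> : t = Bf p t *: s by rewrite memvZ ?memv_line.
apply/eqP; rewrite -subr_eq0; apply/eqP; apply: Sigma_Bf_eq0 => [|q qPi].
  by rewrite memvB ?memvZ.
have : q - Bf s q *: p \in (perp <[s]> :&: Pi)%VS.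
  rewrite memv_cap; apply/andP; split; last by rewrite memvB ?memvZ.
  by apply/memv_perp_line; rewrite linearB linearZ /= (BfC s p) Bps mulr1 subrr.
move/tG/eqP; rewrite BfBl BfZl subr_eq0 => /eqP Bqt.
by rewrite BfBl BfZl BfC Bqt mulrC subrr.
Qed.

Lemma fmap_line p s : p \in Pi -> s \in Sigma -> Bf p s = 1 ->
  fmap Pi Sigma <[p + s]> = (<[s]>%VS, (perp <[p]> :&: Sigma)%VS).
Proof.
move=> pPi sSigma Bps; rewrite /fmap (perp_line_addr_cap _ tsSigma sSigma).
by rewrite addrC (perp_line_addr_cap _ tsPi pPi) (perp_perp_line_cap pPi).
Qed.

Lemma antiflag_line_polar p s : s \in Sigma -> Bf p s = 1 ->
  antiflag Sigma (<[s]>%VS, (perp <[p]> :&: Sigma)%VS).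
Proof.
move=> sSigma Bps; split => /=; rewrite ?capvSr -?memvE //.
- by rewrite dim_vline (Bf_eq1_neq0 Bps).
- by rewrite (dim_perp_line_cap sSigma Bps) dimSigma subn1.
- exact: notin_perp_line.
Qed.

Lemma polar_line_cap_inj p p' s : p \in Pi -> p' \in Pi -> s \in Sigma ->
  Bf p s = 1 -> Bf p' s = 1 ->
  (perp <[p]> :&: Sigma = perp <[p']> :&: Sigma)%VS -> p = p'.
Proof.
move=> pPi p'Pi sSigma Bps Bp's Kpp'.
apply/eqP; rewrite -subr_eq0; apply/eqP.
apply: Pi_Bf_eq0 => [|t]; first by rewrite memvB.
rewrite -(perp_line_cap_addv_line sSigma Bps).
move=> /memv_addP [k kK [_ /vlineP [c ->] ->]].
have Bpk : Bf p k = 0 by move: kK; rewrite memv_cap => /andP [/memv_perp_line].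
have Bp'k : Bf p' k = 0 by move: kK; rewrite Kpp' memv_cap => /andP [/memv_perp_line].
by rewrite BfBl !linearD !linearZ /= Bpk Bp'k Bps Bp's subrr.
Qed.

Lemma polar_line_cap_onto H s : (H <= Sigma)%VS -> \dim H = (n - 1)%N ->
  s \in Sigma -> s \notin H ->
  exists2 p, p \in Pi /\ Bf p s = 1 & (perp <[p]> :&: Sigma = H)%VS.
Proof.
move=> HSigma dimH sSigma sH.
have n_gt0 : (0 < n)%N.
  rewrite -dimSigma lt0n dimv_eq0; apply: contraNneq sH => Sigma0.
  by move: sSigma; rewrite Sigma0 memv0 => /eqP ->; apply: mem0v.
have HsSigma : (H + <[s]> = Sigma)%VS.
  apply/eqP; rewrite eqEdim subv_add HSigma -memvE sSigma /=.
  by rewrite dim_addv_line // dimH dimSigma subn1 prednK.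
have : (Pi :&: perp H != 0)%VS.
  by apply: perp_cap_neq0; rewrite dimH dimPi subn1 ltn_predL.
rewrite -vpick0; set p := vpick _ => p0.
have /andP [pPi /memv_perp pH] : (p \in Pi) && (p \in perp H).
  by rewrite -memv_cap memv_pick.
have Bps : Bf p s = 1.
  apply: F2_eq1; apply: contraNneq p0 => Bps0; apply/eqP/Pi_Bf_eq0 => // t.
  rewrite -HsSigma => /memv_addP [h hH [_ /vlineP [c ->] ->]].
  by rewrite linearD linearZ /= BfC pH // Bps0 mulr0 addr0.
exists p => //; apply/esym/eqP.
rewrite eqEdim (dim_perp_line_cap sSigma Bps) dimSigma dimH subn1 leqnn andbT.
apply/subvP => h hH; rewrite memv_cap (subvP HSigma) // andbT.
by apply/memv_perp_line; rewrite BfC pH.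
Qed.

Lemma fmap_antiflag X : nonsingular_point X -> antiflag Sigma (fmap Pi Sigma X).
Proof.
move=> /nonsingular_pointP [p [s [pPi sSigma Bps ->]]].
by rewrite fmap_line //; apply: antiflag_line_polar.
Qed.

Lemma fmap_inj X Y : nonsingular_point X -> nonsingular_point Y ->
  fmap Pi Sigma X = fmap Pi Sigma Y -> X = Y.
Proof.
move=> /nonsingular_pointP [p [s [pPi sSigma Bps ->]]].
move=> /nonsingular_pointP [p' [s' [p'Pi s'Sigma Bp's' ->]]].
rewrite !fmap_line // => /eqP; rewrite xpair_eqE => /andP [/eqP sE /eqP Kpp'].
have ss' := vline_inj_F2 (Bf_eq1_neq0 Bp's') sE.
by subst s'; rewrite (polar_line_cap_inj pPi p'Pi sSigma Bps Bp's' Kpp').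
Qed.

Lemma fmap_surj PH : antiflag Sigma PH ->
  exists2 X, nonsingular_point X & fmap Pi Sigma X = PH.
Proof.
case: PH => P H [/= PSigma /vpick_line Ps HSigma dimH PH].
set s := vpick P in Ps.
have sSigma : s \in Sigma by rewrite memvE -Ps.
have sH : s \notin H by rewrite memvE -Ps.
have [p [pPi Bps] KH] := polar_line_cap_onto HSigma dimH sSigma sH.
exists <[p + s]>%VS; first exact: nonsingular_point_line.
by rewrite fmap_line // Ps KH.
Qed.

End PolarityMap.

Theorem mainTheorem2 (n : nat) (Pi Sigma : {vspace V n}) :
  (2 <= n)%N ->
  totally_singular Pi -> totally_singular Sigma ->
  \dim Pi = n -> \dim Sigma = n ->
  (Pi :&: Sigma = 0)%VS ->
  [/\ (forall X, nonsingular_point X -> antiflag Sigma (fmap Pi Sigma X)),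
      (forall X Y, nonsingular_point X -> nonsingular_point Y ->
         fmap Pi Sigma X = fmap Pi Sigma Y -> X = Y)
    & (forall PH, antiflag Sigma PH ->
         exists2 X, nonsingular_point X & fmap Pi Sigma X = PH)].
Proof.
move=> _ tsPi tsSigma dimPi dimSigma Pi_cap_Sigma.
by split=> [X|X Y|PH]; [exact: fmap_antiflag | exact: fmap_inj | exact: fmap_surj].
Qed.
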